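(* For every nontrivial finite group $G$, $\beta(G)\ge\beta_{\mathrm g}(G)$. Moreover, there exist finite groups $G$ with $\beta(G)>\beta_{\mathrm g}(G)$.
   Context: For a nonempty subset $X$ of a group $G$, $Q(X):=\{xy^{-1}: x,y\in X\}$. Nonempty subsets $S_1,S_2,S_3$ of $G$ satisfy the Triple Product Property (TPP) if for all $s_i\in Q(S_i)$: $s_1s_2s_3=1$ iff $s_1=s_2=s_3=1$. A group $G$ realizes $\langle n,p,m\rangle$ if there are subsets $S_1,S_2,S_3\subseteq G$ with $|S_1|=n$, $|S_2|=p$, $|S_3|=m$ satisfying the TPP; it realizes it through subgroups if the $S_i$ can be chosen to be subgroups. For a nontrivial finite group $G$, the TPP capacity is $\beta(G):=\max\{npm : G \text{ realizes } \langle n,p,m\rangle\}$ and the TPP subgroup capacity is $\beta_{\mathrm g}(G):=\max\{npm : G \text{ realizes } \langle n,p,m\rangle \text{ through subgroups}\}$. *)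

From mathcomp Require Import all_boot all_fingroup.
Set Implicit Arguments. Unset Strict Implicit. Unset Printing Implicit Defensive.
Local Open Scope group_scope.

Definition Qset (gT : finGroupType) (X : {set gT}) : {set gT} :=
  [set x * y^-1 | x in X, y in X].

Definition TPP (gT : finGroupType) (G : {set gT}) (S1 S2 S3 : {set gT}) : bool :=
  [&& S1 != set0, S2 != set0, S3 != set0,
      S1 \subset G, S2 \subset G, S3 \subset G &
      [forall s1 in Qset S1, forall s2 in Qset S2, forall s3 in Qset S3,
         (s1 * s2 * s3 == 1) == [&& s1 == 1, s2 == 1 & s3 == 1]]].

Definition realizes (gT : finGroupType) (G : {set gT}) (n p m : nat) : Prop :=
  exists S1 S2 S3 : {set gT},
    [/\ TPP G S1 S2 S3, #|S1| = n, #|S2| = p & #|S3| = m].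

Definition realizes_sub (gT : finGroupType) (G : {set gT}) (n p m : nat) : Prop :=
  exists S1 S2 S3 : {group gT},
    [/\ TPP G S1 S2 S3, #|S1| = n, #|S2| = p & #|S3| = m].

Definition triple (gT : finGroupType) := ({set gT} * {set gT} * {set gT})%type.

Definition beta (gT : finGroupType) (G : {set gT}) : nat :=
  \max_(S : triple gT | TPP G S.1.1 S.1.2 S.2) (#|S.1.1| * #|S.1.2| * #|S.2|)%N.

Definition beta_g (gT : finGroupType) (G : {set gT}) : nat :=
  \max_(S : triple gT | [&& group_set S.1.1, group_set S.1.2, group_set S.2 &
                           TPP G S.1.1 S.1.2 S.2])
     (#|S.1.1| * #|S.1.2| * #|S.2|)%N.

(* Every subgroup triple with the TPP is a triple of subsets with the TPP,
   so [beta_g G <= beta G].  For strictness take the dicyclic group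
   Dic3 = <a, x | a^6 = 1, x^2 = a^3, a^x = a^-1> of order 12.  Every
   nontrivial subgroup contains the central involution a^3 or the element
   a^2 of order 3, while subgroups with the TPP intersect pairwise
   trivially; so one of the three subgroups is trivial and the other two
   have product of orders at most 12.  On the other hand the subsets
   {1, x, a^3, a^3 x}, {1, a x}, {1, a^2 x} have the TPP, giving 16. *)

From HB Require Import structures.
From mathcomp Require Import all_boot all_fingroup ssralg zmodp.
Set Implicit Arguments. Unset Strict Implicit. Unset Printing Implicit Defensive.

Local Open Scope group_scope.

Section TriplePropertyFacts.

Variables (gT : finGroupType) (G : {set gT}).

Lemma mem_Qset_group (A : {group gT}) x : x \in A -> x \in Qset A.
Proof.
by move=> Ax; apply/imset2P; exists x 1; rewrite ?group1 ?invg1 ?mulg1.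
Qed.

Lemma TPP_subset S1 S2 S3 :
  TPP G S1 S2 S3 -> [/\ S1 \subset G, S2 \subset G & S3 \subset G].
Proof. by case/and5P=> _ _ _ sS1G /and3P[sS2G sS3G _]. Qed.

Lemma TPP_prod1 S1 S2 S3 s1 s2 s3 :
    TPP G S1 S2 S3 -> s1 \in Qset S1 -> s2 \in Qset S2 -> s3 \in Qset S3 ->
  s1 * s2 * s3 = 1 -> [/\ s1 = 1, s2 = 1 & s3 = 1].
Proof.
case/and5P=> _ _ _ _ /and3P[_ _ /forall_inP tpp] Qs1 Qs2 Qs3 prod1.
move: (tpp s1 Qs1) => /forall_inP /(_ s2 Qs2) /forall_inP /(_ s3 Qs3).
by rewrite prod1 eqxx => /eqP /esym /and3P[/eqP-> /eqP-> /eqP->].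
Qed.

Lemma TPP_subgroups_TI (A B C : {group gT}) :
  TPP G A B C -> [/\ A :&: B = 1, B :&: C = 1 & A :&: C = 1].
Proof.
move=> tpp; split; apply/trivgP/subsetP => x /setIP[xX xY]; rewrite inE.
- have prod1 : x * x^-1 * 1 = 1 by rewrite mulgV mulg1.
  by have [-> _ _] := TPP_prod1 tpp (mem_Qset_group xX)
    (mem_Qset_group (groupVr xY)) (mem_Qset_group (group1 C)) prod1.
- have prod1 : 1 * x * x^-1 = 1 by rewrite mul1g mulgV.
  by have [_ -> _] := TPP_prod1 tpp (mem_Qset_group (group1 A))
    (mem_Qset_group xX) (mem_Qset_group (groupVr xY)) prod1.
- have prod1 : x * 1 * x^-1 = 1 by rewrite mulg1 mulgV.
  by have [-> _ _] := TPP_prod1 tpp (mem_Qset_group xX)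
    (mem_Qset_group (group1 B)) (mem_Qset_group (groupVr xY)) prod1.
Qed.

Lemma TPP_le_beta S1 S2 S3 :
  TPP G S1 S2 S3 -> (#|S1| * #|S2| * #|S3| <= beta G)%N.
Proof.
exact: (@leq_bigmax_cond _ (fun S : triple gT => TPP G S.1.1 S.1.2 S.2)
          (fun S => #|S.1.1| * #|S.1.2| * #|S.2|)%N (S1, S2, S3)).
Qed.

Lemma beta_g_le_beta : (beta_g G <= beta G)%N.
Proof. by apply/bigmax_leqP => S /and4P[_ _ _ /TPP_le_beta]. Qed.

End TriplePropertyFacts.

Section TwoElementCover.

Variables (gT : finGroupType) (G : {group gT}).

Lemma TI_card_mul_le (A B : {group gT}) :
  A \subset G -> B \subset G -> A :&: B = 1 -> (#|A| * #|B| <= #|G|)%N.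
Proof.
by move=> sAG sBG tiAB; rewrite -TI_cardMg // subset_leq_card // mul_subG.
Qed.

Variables z t : gT.
Hypotheses (ntz : z != 1) (ntt : t != 1).
Hypothesis subgroup_cover :
  forall H : {group gT}, H \subset G -> H :!=: 1 -> (z \in H) || (t \in H).

Lemma pairwise_TI_trivial (A B C : {group gT}) :
    A \subset G -> B \subset G -> C \subset G ->
    A :&: B = 1 -> B :&: C = 1 -> A :&: C = 1 ->
  [|| A :==: 1, B :==: 1 | C :==: 1].
Proof.
move=> sAG sBG sCG tiAB tiBC tiAC.
apply/negPn; rewrite !negb_or; apply/negP => /and3P[ntA ntB ntC].
have clash x (X Y : {group gT}) : X :&: Y = 1 -> x \in X -> x \in Y -> x != 1 -> False.
  move=> tiXY xX xY; have: x \in X :&: Y by rewrite inE xX xY.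
  by rewrite tiXY inE => /eqP->; rewrite eqxx.
have /orP[zA|tA] := subgroup_cover sAG ntA;
  have /orP[zB|tB] := subgroup_cover sBG ntB;
  have /orP[zC|tC] := subgroup_cover sCG ntC.
all: by [ apply: (@clash z _ _ tiAB) | apply: (@clash z _ _ tiBC) | apply: (@clash z _ _ tiAC)
        | apply: (@clash t _ _ tiAB) | apply: (@clash t _ _ tiBC) | apply: (@clash t _ _ tiAC) ].
Qed.

Lemma TPP_subgroups_card_le (A B C : {group gT}) :
  TPP G A B C -> (#|A| * #|B| * #|C| <= #|G|)%N.
Proof.
move=> tpp; have [sAG sBG sCG] := TPP_subset tpp.
have [tiAB tiBC tiAC] := TPP_subgroups_TI tpp.
case/or3P: (pairwise_TI_trivial sAG sBG sCG tiAB tiBC tiAC) => /eqP->;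
  rewrite cards1 ?mul1n ?muln1.
- exact: TI_card_mul_le sBG sCG tiBC.
- exact: TI_card_mul_le sAG sCG tiAC.
- exact: TI_card_mul_le sAG sBG tiAB.
Qed.

Lemma beta_g_le_card : (beta_g G <= #|G|)%N.
Proof.
apply/bigmax_leqP => [[[A B] C]] /and4P[gA gB gC].
exact: (@TPP_subgroups_card_le (Group gA) (Group gB) (Group gC)).
Qed.

End TwoElementCover.

Section SequenceCheck.

Variable gT : finGroupType.

Definition quotients (s : seq gT) : seq gT := [seq x * y^-1 | x <- s, y <- s].

Definition tpp_check (s1 s2 s3 : seq gT) : bool :=
  all (fun q1 => all (fun q2 => all (fun q3 =>
    (q1 * q2 * q3 == 1) == [&& q1 == 1, q2 == 1 & q3 == 1])
  (quotients s3)) (quotients s2)) (quotients s1).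

Lemma mem_quotients (s : seq gT) q : q \in Qset [set x in s] -> q \in quotients s.
Proof. by case/imset2P=> x y; rewrite !inE => xs ys ->; apply: allpairs_f. Qed.

Lemma TPP_setT_seq (x1 x2 x3 : gT) (s1 s2 s3 : seq gT) :
    tpp_check (x1 :: s1) (x2 :: s2) (x3 :: s3) ->
  TPP [set: gT] [set x in x1 :: s1] [set x in x2 :: s2] [set x in x3 :: s3].
Proof.
have ne x s : [set y in x :: s] != set0 by apply/set0Pn; exists x; rewrite !inE eqxx.
move=> check; rewrite /TPP !ne !subsetT /=.
apply/forall_inP => q1 /mem_quotients Q1; apply/forall_inP => q2 /mem_quotients Q2.
apply/forall_inP => q3 /mem_quotients Q3.
by move/allP: check => /(_ q1 Q1) /allP /(_ q2 Q2) /allP /(_ q3 Q3).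
Qed.

Lemma card_set_seq (s : seq gT) : uniq s -> #|[set x in s]| = size s.
Proof. by move=> uniq_s; rewrite cardsE; apply/card_uniqP. Qed.

End SequenceCheck.

(* [Dic (i, j)] stands for a^i x^j in Dic3 = <a, x | a^6 = 1, x^2 = a^3, a^x = a^-1>. *)
Inductive dic := Dic of ('I_6 * bool).
Definition dval (u : dic) := let: Dic p := u in p.
Lemma dvalK : cancel dval Dic. Proof. by case. Qed.
HB.instance Definition _ := Finite.copy dic (can_type dvalK).

Local Open Scope ring_scope.
Definition dic_mul (u v : dic) : dic :=
  let: Dic (i, j) := u in let: Dic (k, l) := v in
  Dic (i + (if j then - k else k) + (if j && l then 3%:R else 0), j (+) l).
Definition dic_one := Dic (0, false).
Definition dic_inv (u : dic) : dic :=
  let: Dic (i, j) := u in if j then Dic (i + 3%:R, true) else Dic (- i, false).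
Local Close Scope ring_scope.

Definition dic_elt (k : nat) (b : bool) : dic := Dic (inZp k, b).

(* An explicit enumeration, since [card] and [enum] are locked and do not compute. *)
Definition dic_elts := [seq dic_elt k b | k <- iota 0 6, b <- [:: false; true]].

Lemma mem_dic_elts u : u \in dic_elts.
Proof. by case: u => [[[[|[|[|[|[|[|k]]]]]] lt_k6] []]]. Qed.

Lemma all_dic_elts (P : pred dic) : all P dic_elts -> forall u, P u.
Proof. by move=> /allP allP_elts u; apply: allP_elts; apply: mem_dic_elts. Qed.

Lemma dic_mulA : associative dic_mul.
Proof.
have check : all (fun u => all (fun v => all (fun w =>
  dic_mul (dic_mul u v) w == dic_mul u (dic_mul v w)) dic_elts) dic_elts) dic_elts.
  by vm_compute.
move=> u v w; move/allP: check => /(_ u (mem_dic_elts u)).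
by move=> /allP /(_ v (mem_dic_elts v)) /allP /(_ w (mem_dic_elts w)) /eqP.
Qed.

Lemma dic_mul1 : left_id dic_one dic_mul.
Proof. by move=> u; apply/eqP; move: u; apply: all_dic_elts; vm_compute. Qed.

Lemma dic_mulV : left_inverse dic_one dic_inv dic_mul.
Proof. by move=> u; apply/eqP; move: u; apply: all_dic_elts; vm_compute. Qed.

HB.instance Definition _ := Finite_isGroup.Build dic dic_mulA dic_mul1 dic_mulV.

Definition dic_z := dic_elt 3 false.
Definition dic_t := dic_elt 2 false.

Lemma dic_z_neq1 : dic_z != 1. Proof. by vm_compute. Qed.
Lemma dic_t_neq1 : dic_t != 1. Proof. by vm_compute. Qed.

Lemma card_dic : #|[set: dic]| = 12%N.
Proof.
rewrite -[12%N]/(size dic_elts) -(card_set_seq (isT : uniq dic_elts)).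
by apply: eq_card => u; rewrite in_setT in_set mem_dic_elts.
Qed.

Lemma dic_subgroup_cover (H : {group dic}) :
  H \subset [set: dic] -> H :!=: 1 -> (dic_z \in H) || (dic_t \in H).
Proof.
have powers : all (fun u => (u == 1) ||
  has (fun n => (u ^+ n == dic_z) || (u ^+ n == dic_t)) (iota 0 6)) dic_elts.
  by vm_compute.
move=> _ /trivgPn[u Hu /negPf u_neq1].
move: (all_dic_elts powers u); rewrite u_neq1 => /hasP[n _ /orP[]] /eqP <-.
all: by rewrite groupX ?orbT.
Qed.

Lemma beta_g_dic : (beta_g [set: dic] <= 12)%N.
Proof. by rewrite -card_dic (beta_g_le_card dic_z_neq1 dic_t_neq1 dic_subgroup_cover). Qed.

Lemma beta_dic : (16 <= beta [set: dic])%N.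
Proof.
pose S1 := [:: dic_elt 0 false; dic_elt 0 true; dic_elt 3 false; dic_elt 3 true].
pose S2 := [:: dic_elt 0 false; dic_elt 1 true].
pose S3 := [:: dic_elt 0 false; dic_elt 2 true].
have tpp : TPP [set: dic] [set x in S1] [set x in S2] [set x in S3].
  by apply: TPP_setT_seq; vm_compute.
by have := TPP_le_beta tpp; rewrite !card_set_seq.
Qed.

Theorem mainTheorem6 :
  (forall (gT : finGroupType) (G : {group gT}), G :!=: 1%g -> beta_g G <= beta G)%N /\
  (exists (gT : finGroupType) (G : {group gT}), G :!=: 1%g /\ (beta_g G < beta G)%N).
Proof.
split=> [gT G _ | ]; first exact: beta_g_le_beta.
exists dic, [set: dic]%G; split.
  by apply/trivgPn; exists dic_z; rewrite ?inE ?dic_z_neq1.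
exact: leq_ltn_trans beta_g_dic (leq_trans _ beta_dic).
Qed.
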